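(* Let $G$ be an arbitrary connected graph on $n$ vertices, let $0<p<\frac{1}{2}$ be a noise parameter and let $0<\delta<\frac{1}{2}$ be a confidence threshold. There exists an adaptive graph searching algorithm (in the noisy graph search model described in the context, with an adversarially fixed target) that, after $$\frac{1}{I(p)}\left(\log_2 n + \mathcal{O}\big(\sqrt{\log n \log \delta^{-1}}\big) + \mathcal{O}(\log \delta^{-1})\right)$$ queries, returns the target correctly with probability at least $1-\delta$, for every choice of the target.
   Context: Noisy graph search model: $G=(V,E)$ is an undirected, unweighted connected graph and $v^*\in V$ is an unknown target. In each step the algorithm queries a vertex $q$. A correct answer is ''yes'' if $q=v^*$, and otherwise is a neighbor $u$ of $q$ lying on a shortest path from $q$ to $v^*$. Each answer, independently, is erroneous with probability $p$ (in which case it may be an arbitrary different answer); otherwise it is correct. The algorithm is adaptive (queries may depend on previous answers). In the adversarial model the target is fixed before the search by an adversary who knows the algorithm. $H(p)=-p\log_2 p-(1-p)\log_2(1-p)$ and $I(p)=1-H(p)$. *)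

From Stdlib Require Import Reals.
From mathcomp Require Import all_boot all_order all_algebra.
From mathcomp Require Import Rstruct.

Set Implicit Arguments.
Unset Strict Implicit.
Unset Printing Implicit Defensive.

Section NoisyGraphSearch.
Variables (V : finType) (e : rel V).

Definition connected_graph : Prop := forall u v : V, connect e u v.

Fixpoint ball (k : nat) (u : V) : {set V} :=
  match k with
  | 0 => [set u]
  | k'.+1 => ball k' u :|: [set y | [exists x in ball k' u, e x y]]
  end.

(* shortest-path (hop) distance; equals #|V| if v is unreachable from u *)
Definition dist (u v : V) : nat := find (fun k => v \in ball k u) (iota 0 #|V|).

(* An answer is None ("yes") or Some u (the neighbour u). *)
Definition answer := option V.

Definition admissible (q : V) (a : answer) : bool :=
  if a is Some u then e q u else true.

Definition correct (t q : V) (a : answer) : bool :=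
  if q == t then a == None
  else if a is Some u then e q u && (dist u t + 1 == dist q t) else false.

(* history of (query, answer) pairs, oldest first *)
Definition history := seq (V * answer).

Record algorithm := Algorithm {
  alg_query : history -> V;
  alg_out : history -> V }.

(* The adversary, knowing the algorithm and the previous error coins and the
   history, chooses (i) which correct answer is given when the answer is correct
   ([cor]) and (ii) which different answer is given when the answer is
   erroneous ([lie]). *)
Definition valid_adversary (t : V)
    (cor lie : seq bool -> history -> V -> answer) : Prop :=
  forall (bs : seq bool) (h : history) (q : V),
    correct t q (cor bs h q) /\ admissible q (lie bs h q) /\
    lie bs h q <> cor bs h q.

(* Run the algorithm on the error-coin sequence bs (true = erroneous answer). *)
Fixpoint run_aux (A : algorithm) (cor lie : seq bool -> history -> V -> answer)
    (bs : seq bool) (prev : seq bool) (h : history) : history :=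
  match bs with
  | [::] => h
  | b :: bs' =>
      let q := alg_query A h in
      let a := if b then lie prev h q else cor prev h q in
      run_aux A cor lie bs' (rcons prev b) (rcons h (q, a))
  end.

Definition run A cor lie (bs : seq bool) : history := run_aux A cor lie bs [::] [::].

Local Open Scope ring_scope.

Definition success_prob (p : R) (T : nat) (A : algorithm)
    (cor lie : seq bool -> history -> V -> answer) (t : V) : R :=
  \sum_(bs : T.-tuple bool)
     (\prod_(i < T) (if tnth bs i then p else 1 - p)) *
     (alg_out A (run A cor lie bs) == t)%:R.

End NoisyGraphSearch.

Local Open Scope R_scope.

Definition log2 (x : R) : R := ln x / ln 2.
Definition Hbin (p : R) : R := - p * log2 p - (1 - p) * log2 (1 - p).
Definition Icap (p : R) : R := 1 - Hbin p.

(* The algorithm keeps a multiplicative weight on every vertex (a factor [1 - p]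
   for each answer consistent with the vertex, [p] otherwise), asks a weighted
   median, i.e. a vertex [q] minimising [sum_v w(v) d(q, v)], and finally outputs
   the heaviest vertex.  At such a median every neighbour of [q] is consistent
   with at most half of the total weight.

   Fix the target [t] and let [Y] be the weight of the other vertices.  The
   output is wrong only if [Y >= w(t)], i.e. if the potential [(Y / w(t))^θ] is at
   least [1].  Thanks to the median property, one answer (correct with
   probability [1 - p], chosen by the adversary otherwise) multiplies the
   potential in expectation by at most
   [ρ(θ) = (1-p) (2(1-p))^-θ + p (2p)^-θ <= 1 - θ I + 36 θ^2 I],
   where [I = ln 2 * I(p)].  The initial potential is at most [n^θ], so [T]
   queries fail with probability at most [ρ(θ)^T n^θ], and
   [θ = min(1/144, sqrt(ln(1/δ) / ln n))] makes this at most [δ] as soon as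
   [T I >= ln n + 50 sqrt(ln n ln(1/δ)) + 202 ln(1/δ)]. *)

From Pilot Require Import Defs.
From Stdlib Require Import Reals Lra Psatz.
From mathcomp Require Import all_boot all_order all_algebra.
From mathcomp Require Import Rstruct.

Set Implicit Arguments.
Unset Strict Implicit.
Unset Printing Implicit Defensive.

Import Order.TTheory GRing.Theory Num.Theory.

Local Open Scope R_scope.

Section SubSums.
Local Open Scope ring_scope.
Variables (R' : numDomainType) (I : finType) (F : I -> R').
Hypothesis F_ge0 : forall i, 0 <= F i.

Lemma ler_sum_subpred (A P : pred I) :
  (forall i, A i -> P i) -> \sum_(i | A i) F i <= \sum_(i | P i) F i.
Proof.
move=> AP; rewrite [leLHS]big_mkcond [leRHS]big_mkcond /=.
apply: ler_sum => i _; case: ifP => [/AP -> //|_].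
by case: ifP.
Qed.

Lemma ler_sum_disjoint (P A B : pred I) : (forall i, A i -> ~~ B i) ->
  \sum_(i | P i && A i) F i + \sum_(i | P i && B i) F i <= \sum_(i | P i) F i.
Proof.
move=> AB; rewrite !big_mkcondr -big_split /=; apply: ler_sum => i _.
case: (boolP (A i)) => [/AB/negbTE ->|_]; first by rewrite addr0.
by rewrite add0r; case: ifP.
Qed.

End SubSums.

Fixpoint expect_coins (p : R) (m : nat) (g : seq bool -> R) : R :=
  if m is m'.+1 then
    (1 - p) * expect_coins p m' (fun s => g (false :: s))
    + p * expect_coins p m' (fun s => g (true :: s))
  else g [::].

Lemma sum_tuple_coins p m (g : seq bool -> R) :
  (\sum_(bs : m.-tuple bool)
     (\prod_(i < m) (if tnth bs i then p else 1 - p)) * g bs)%R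
  = expect_coins p m g.
Proof.
elim: m g => [|m IH] g /=.
  rewrite (eq_bigr (fun _ => g [::])); last first.
    by move=> bs _; rewrite (tuple0 bs) big_ord0 mul1r.
  by rewrite big_const card_tuple /= addr0.
pose cons_tuple (bt : bool * m.-tuple bool) := [tuple of bt.1 :: bt.2].
have cons_bij : bijective cons_tuple.
  exists (fun bs : m.+1.-tuple bool => (thead bs, [tuple of behead bs])).
    by case=> b bs; congr pair; apply: val_inj.
  by move=> bs; apply: val_inj; case: bs => [[|b s]].
rewrite (reindex cons_tuple) /=; last exact: onW_bij.
rewrite -(pair_big xpredT xpredT (fun b (bs : m.-tuple bool) =>
  ((\prod_(i < m.+1) (if tnth (cons_tuple (b, bs)) i then p else 1 - p))
   * g (cons_tuple (b, bs)))%R)) /=.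
rewrite big_bool /= -!IH RplusE addrC.
by congr (_ + _)%R; rewrite big_distrr; apply: eq_bigr => bs _;
  rewrite big_ord_recl /= -mulrA; congr (_ * (_ * _))%R;
  apply: eq_bigr => i _; rewrite tnthS.
Qed.

Lemma expect_coins_const p m c g : (forall s, g s = c) -> expect_coins p m g = c.
Proof. by elim: m g => [|m IH] g g_c /=; rewrite ?IH //; ring. Qed.

Lemma success_prob_expect (V : finType) p T (A : algorithm V) cor lie t :
  success_prob p T A cor lie t
  = expect_coins p T (fun bs => ((alg_out A (run A cor lie bs) == t)%:R)%R).
Proof. by rewrite -sum_tuple_coins. Qed.

Lemma success_prob_card_le1 (V : finType) p T (A : algorithm V) cor lie t :
  (#|V| <= 1)%N -> success_prob p T A cor lie t = 1.
Proof.
move=> /fintype_le1P V_le1; rewrite success_prob_expect; apply: expect_coins_const => bs.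
by rewrite [alg_out _ _](V_le1 t) eqxx mulr1n.
Qed.

(** * Distances and weighted medians *)

Section Distance.
Variables (V : finType) (e : rel V).
Hypothesis esym : symmetric e.

Lemma ball_neighbor k u q v : e u q -> v \in Defs.ball e k q -> v \in Defs.ball e k.+1 u.
Proof.
move=> euq; elim: k v => [|k IH] v /=.
  rewrite in_set1 => /eqP ->; apply/setUP; right.
  by rewrite inE; apply/existsP; exists u; rewrite in_set1 eqxx euq.
case/setUP => [v_k|]; first by apply/setUP; left; apply: IH.
rewrite inE => /existsP [x /andP [x_k exv]].
by apply/setUP; right; rewrite inE; apply/existsP; exists x; rewrite IH.
Qed.

Lemma dist_le_card u v : (Defs.dist e u v <= #|V|)%N.
Proof. by apply: leq_trans (find_size _ _) _; rewrite size_iota. Qed.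

Lemma mem_ball_dist_le k u v : v \in Defs.ball e k u -> (Defs.dist e u v <= k)%N.
Proof.
move=> v_k; case: (ltnP k #|V|) => [k_lt|k_ge]; last first.
  exact: leq_trans (dist_le_card u v) k_ge.
rewrite leqNgt; apply: contraL v_k => lt_k.
by have := before_find 0%N lt_k; rewrite nth_iota //= add0n => ->.
Qed.

Lemma mem_ball_dist u v :
  (Defs.dist e u v < #|V|)%N -> v \in Defs.ball e (Defs.dist e u v) u.
Proof.
move=> lt_card; have has_k : has (fun k => v \in Defs.ball e k u) (iota 0 #|V|).
  by rewrite has_find size_iota.
by have := nth_find 0%N has_k; rewrite nth_iota ?add0n.
Qed.

Lemma dist_neighbor_le u q v : e q u -> (Defs.dist e u v <= (Defs.dist e q v).+1)%N.
Proof.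
move=> equ; case: (ltnP (Defs.dist e q v) #|V|) => [lt_card|ge_card].
  by apply: mem_ball_dist_le; apply: ball_neighbor (mem_ball_dist lt_card); rewrite esym.
exact: leq_trans (dist_le_card u v) (leq_trans ge_card _).
Qed.

End Distance.

Section WeightedMedian.
Local Open Scope ring_scope.
Variables (V : finType) (e : rel V) (mu : V -> R).
Hypotheses (esym : symmetric e) (mu_ge0 : forall v, 0 <= mu v).

Definition dist_moment (q : V) : R := \sum_v mu v * (Defs.dist e q v)%:R.

Lemma dist_moment_neighbor q u (C := fun v => correct e v q (Some u)) : e q u ->
  dist_moment u <= dist_moment q + \sum_(v | ~~ C v) mu v - \sum_(v | C v) mu v.
Proof.
move=> equ.
have pointwise v : mu v * (Defs.dist e u v)%:R
    <= mu v * (Defs.dist e q v)%:R + (if C v then - mu v else mu v).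
  case: ifP => [|_].
    rewrite /C /correct; case: eqP => // _ /andP [_ /eqP <-].
    by rewrite natrD mulrDr mulr1 addrK.
  rewrite -[X in _ + X]mulr1 -mulrDr ler_wpM2l // natr1 ler_nat.
  exact: dist_neighbor_le.
apply: le_trans (ler_sum _ (fun v _ => pointwise v)) _.
rewrite big_split /= -addrA lerD2l (bigID C) /= addrC.
rewrite (eq_bigr (fun v => mu v)); last by move=> v /negbTE ->.
by rewrite [X in _ + X](eq_bigr (fun v => - mu v)) ?sumrN // => v ->.
Qed.

Lemma median_halves q u : (forall x, dist_moment q <= dist_moment x) ->
  (\sum_(v | correct e v q (Some u)) mu v) *+ 2 <= \sum_v mu v.
Proof.
move=> q_min; have [equ|/negbTE nequ] := boolP (e q u); last first.
  rewrite big_pred0 ?mul0rn ?sumr_ge0 // => v.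
  by rewrite /correct nequ; case: ifP.
have := le_trans (q_min u) (dist_moment_neighbor equ).
rewrite -addrA lerDl subr_ge0 => le_C.
by rewrite [leRHS](bigID (fun v => correct e v q (Some u))) /= mulr2n lerD2l.
Qed.

End WeightedMedian.

(** * Multiplicative weights *)

Section Weights.
Variables (V : finType) (e : rel V) (p : R) (v0 : V).

Definition weight (h : history V) (v : V) : R :=
  (\prod_(x <- h) if correct e v x.1 x.2 then 1 - p else p)%R.

Definition median_query (h : history V) : V :=
  [arg min_(q < v0) dist_moment e (weight h) q]%O.

Definition heaviest (h : history V) : V := [arg max_(v > v0) weight h v]%O.

Definition median_search : algorithm V := Algorithm median_query heaviest.

Lemma weight_rcons h q a v :
  weight (rcons h (q, a)) v = weight h v * (if correct e v q a then 1 - p else p).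
Proof. by rewrite /weight big_rcons. Qed.

Lemma median_query_min h q :
  (dist_moment e (weight h) (median_query h) <= dist_moment e (weight h) q)%R.
Proof. by rewrite /median_query; case: arg_minP => // m _; apply. Qed.

Lemma heaviest_max h v : (weight h v <= weight h (heaviest h))%R.
Proof. by rewrite /heaviest; case: arg_maxP => // m _; apply. Qed.

Hypotheses (p_gt0 : 0 < p) (p_lt1 : p < 1).

Lemma weight_gt0 h v : 0 < weight h v.
Proof.
apply/RltP/prodr_gt0 => x _.
by case: ifP => _; [rewrite subr_gt0|]; apply/RltP.
Qed.

Lemma weight_ge0 h v : (0 <= weight h v)%R.
Proof. exact/RleP/Rlt_le/weight_gt0. Qed.

Hypothesis esym : symmetric e.

Lemma median_query_halves h u :
  2 * (\sum_(v | correct e v (median_query h) (Some u)) weight h v)%R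
  <= (\sum_v weight h v)%R.
Proof.
have := median_halves esym (@weight_ge0 h) u (@median_query_min h).
by rewrite mulr2n -RplusE => /RleP; lra.
Qed.

End Weights.

(** * The contraction factor *)

Lemma exp_le_exp x y : x <= y -> exp x <= exp y.
Proof. by move=> [/exp_increasing/Rlt_le //|->]; apply: Rle_refl. Qed.

Lemma ln_le_sub1 x : 0 < x -> ln x <= x - 1.
Proof. by move=> x_gt0; have := exp_ineq1_le (ln x); rewrite exp_ln //; lra. Qed.

Lemma one_sub_inv_le_ln x : 0 < x -> 1 - / x <= ln x.
Proof.
move=> x_gt0; have := ln_le_sub1 (Rinv_0_lt_compat _ x_gt0).
by rewrite ln_Rinv //; lra.
Qed.

Lemma ln_gt0 x : 1 < x -> 0 < ln x.
Proof. by move=> x_gt1; rewrite -ln_1; apply: ln_increasing; lra. Qed.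

Lemma ln_ge0 x : 1 <= x -> 0 <= ln x.
Proof. by case=> [/ln_gt0/Rlt_le //|<-]; rewrite ln_1; apply: Rle_refl. Qed.

Lemma half_lt_ln_inv d : 0 < d < 1/2 -> / 2 < ln (/ d).
Proof.
move=> d_bd; have := ln_lt_2; suff : ln 2 < ln (/ d) by lra.
apply: ln_increasing; first lra.
by rewrite -[2]Rinv_inv; apply: Rinv_lt_contravar; lra.
Qed.

Lemma exp_opp_le y : 0 <= y -> exp (- y) <= 1 - y + y ^ 2.
Proof.
move=> y_ge0; rewrite exp_Ropp; have := exp_ineq1_le y.
move=> exp_ge; apply: Rle_trans (_ : / (1 + y) <= _).
  by apply: Rinv_le_contravar; lra.
apply: (Rmult_le_reg_l (1 + y)); first lra.
by rewrite Rinv_r; nra.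
Qed.

Lemma exp_le_quadratic s : 0 <= s -> exp s <= 1 + s + s ^ 2 * exp s.
Proof.
move=> s_ge0; have := exp_ineq1_le (- s); have := exp_pos s.
have : exp (- s) * exp s = 1 by rewrite exp_Ropp; field; apply: exp_neq_0.
move=> inv exp_gt0 exp_ge; have : (1 - s) * exp s <= 1 by nra.
nra.
Qed.

Lemma sqrt_mul_ln_sq_le b : 0 < b < 1 -> sqrt b * ln b ^ 2 <= 16 * (1 - b) ^ 2.
Proof.
move=> b_bd; set r := sqrt (sqrt b).
have sb_gt0 : 0 < sqrt b by apply: sqrt_lt_R0; lra.
have r_gt0 : 0 < r by apply: sqrt_lt_R0.
have rr : r * r = sqrt b by apply: sqrt_sqrt; lra.
have sbsb : sqrt b * sqrt b = b by apply: sqrt_sqrt; lra.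
have ln_b : ln b = 4 * ln r by rewrite -sbsb -rr !ln_mult //; try ring; nra.
have sb_lt1 : sqrt b < 1 by rewrite -sqrt_1; apply: sqrt_lt_1_alt; lra.
have r_lt1 : r < 1 by rewrite -sqrt_1; apply: sqrt_lt_1_alt; lra.
have ln_r : r * - ln r <= 1 - r.
  have := one_sub_inv_le_ln r_gt0.
  have : r * / r = 1 by field; lra.
  nra.
have ln_r_le0 : 0 <= - ln r by have := ln_increasing _ _ r_gt0 r_lt1; rewrite ln_1; lra.
have r_ge_b : b <= r by nra.
have : (r * - ln r) ^ 2 <= (1 - r) ^ 2 by apply: pow_incr; split; nra.
have : (1 - r) ^ 2 <= (1 - b) ^ 2 by apply: pow_incr; lra.
have -> : sqrt b * ln b ^ 2 = 16 * (r * - ln r) ^ 2 by rewrite ln_b -rr; ring.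
lra.
Qed.

Lemma Rpower_gt0 x t : 0 < Rpower x t.
Proof. exact: exp_pos. Qed.

Lemma Rpower_le_affine x t : 0 < x -> 0 <= t <= 1 -> Rpower x t <= 1 + t * (x - 1).
Proof.
move=> x_gt0 t_bd; set m := 1 + t * (x - 1).
have m_gt0 : 0 < m by rewrite /m; nra.
have mx_gt0 : 0 < x / m by apply: Rdiv_lt_0_compat.
have im_gt0 : 0 < / m by apply: Rinv_0_lt_compat.
rewrite /Rpower -[m]exp_ln //; apply: exp_le_exp.
have ln_xm := ln_le_sub1 mx_gt0; have ln_im := ln_le_sub1 im_gt0.
rewrite ln_Rinv // in ln_im; rewrite /Rdiv ln_mult // ln_Rinv // in ln_xm.
have balance : t * (x / m - 1) + (1 - t) * (/ m - 1) = 0.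
  by rewrite /m; field; apply: Rgt_not_eq.
nra.
Qed.

Lemma Rpower_div_double x y t : 0 < x -> 0 < y ->
  Rpower (x / y) t = Rpower (2 * x) t * Rpower (2 * y) (- t).
Proof.
move=> x_gt0 y_gt0; rewrite /Rpower -exp_plus; congr exp.
have x2_gt0 : 0 < 2 * x by lra.
have y2_gt0 : 0 < 2 * y by lra.
rewrite (_ : x / y = 2 * x * / (2 * y)); last by field; lra.
rewrite ln_mult ?ln_Rinv //; first ring.
exact: Rinv_0_lt_compat.
Qed.

Lemma mul_Rpower_double x t :
  0 < x -> x * Rpower (2 * x) (- t) = / 2 * Rpower (2 * x) (1 - t).
Proof.
move=> x_gt0; rewrite (Rpower_plus 1 (- t)) Rpower_1; last lra.
by rewrite -Rmult_assoc; congr Rmult; field.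
Qed.

Definition contraction p t :=
  (1 - p) * Rpower (2 * (1 - p)) (- t) + p * Rpower (2 * p) (- t).

Lemma contraction_gt0 p t : 0 < p < 1 -> 0 < contraction p t.
Proof.
move=> p_bd; have := Rpower_gt0 (2 * (1 - p)) (- t); have := Rpower_gt0 (2 * p) (- t).
by rewrite /contraction; nra.
Qed.

Lemma contraction_terms_le p t : 0 < p < 1/2 -> t <= 1 ->
  p * Rpower (2 * p) (- t) <= (1 - p) * Rpower (2 * (1 - p)) (- t).
Proof.
move=> p_bd t_le1; rewrite !mul_Rpower_double; try lra.
by apply: Rmult_le_compat_l; [lra | apply: Rle_Rpower_l; lra].
Qed.

Lemma contraction_ge p t A B :
  0 < p < 1/2 -> 0 < t <= 1 -> 0 < A <= 1/2 -> 0 < B <= 1 - A ->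
  (1 - p) * Rpower (A / (1 - p)) t + p * Rpower (B / p) t <= contraction p t.
Proof.
move=> p_bd t_bd A_bd B_bd.
have B_le : Rpower (B / p) t <= Rpower ((1 - A) / p) t.
  apply: Rle_Rpower_l; first lra.
  split; first by apply: Rdiv_lt_0_compat; lra.
  by apply: Rmult_le_compat_r; [apply/Rlt_le/Rinv_0_lt_compat|]; lra.
rewrite (Rpower_div_double (x := 1 - A)) in B_le; try lra.
rewrite Rpower_div_double; try lra.
have terms := contraction_terms_le p_bd (proj2 t_bd).
move: terms B_le; rewrite /contraction.
set a := Rpower (2 * (1 - p)) (- t); set b := Rpower (2 * p) (- t) => terms B_le.
have a_gt0 : 0 < a by apply: Rpower_gt0.
have b_gt0 : 0 < b by apply: Rpower_gt0.
have t_bd' : 0 <= t <= 1 by lra.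
have affA := Rpower_le_affine (ltac:(lra) : 0 < 2 * A) t_bd'.
have affB := Rpower_le_affine (ltac:(lra) : 0 < 2 * (1 - A)) t_bd'.
have termA : (1 - p) * (Rpower (2 * A) t * a) <= (1 - p) * a * (1 + t * (2 * A - 1)).
  rewrite (Rmult_comm (Rpower _ _) a) -Rmult_assoc.
  by apply: Rmult_le_compat_l; first apply: Rmult_le_pos; lra.
have termB : p * Rpower (B / p) t <= p * b * (1 + t * (2 * (1 - A) - 1)).
  apply: (Rle_trans _ (p * (Rpower (2 * (1 - A)) t * b))).
    by apply: Rmult_le_compat_l; lra.
  rewrite (Rmult_comm (Rpower _ _) b) -Rmult_assoc.
  by apply: Rmult_le_compat_l; first apply: Rmult_le_pos; lra.
have : 0 <= t * (1 - 2 * A) * ((1 - p) * a - p * b) by apply: Rmult_le_pos; nra.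
nra.
Qed.

(* [Xc] and [Xl] are the off-target weights consistent with the correct and
   with the lying answer, [k] is the factor the lie puts on the target. *)
Lemma contraction_step_le p th Y w Xc Xl k :
  0 < p < 1/2 -> 0 < th <= 1 -> 0 < Y -> 0 < w -> 0 <= Xc -> 0 <= Xl ->
  2 * Xc <= Y -> Xc + Xl <= Y -> p <= k ->
  (1 - p) * Rpower ((p * Y + (1 - 2 * p) * Xc) / (w * (1 - p))) th
  + p * Rpower ((p * Y + (1 - 2 * p) * Xl) / (w * k)) th
  <= contraction p th * Rpower (Y / w) th.
Proof.
move=> p_bd th_bd Y_gt0 w_gt0 Xc_ge0 Xl_ge0 Xc_le XcXl_le p_le_k.
set A := (p * Y + (1 - 2 * p) * Xc) / Y; set B := (p * Y + (1 - 2 * p) * Xl) / Y.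
have A_bd : 0 < A <= 1/2.
  split; first by rewrite /A; apply: Rdiv_lt_0_compat; nra.
  by apply: (Rmult_le_reg_r Y) => //; rewrite /A; field_simplify; nra.
have B_bd : 0 < B <= 1 - A.
  split; first by rewrite /B; apply: Rdiv_lt_0_compat; nra.
  by apply: (Rmult_le_reg_r Y) => //; rewrite /A /B; field_simplify; nra.
have Yw_gt0 : 0 < Y / w by apply: Rdiv_lt_0_compat.
have A_gt0 : 0 < A / (1 - p) by apply: Rdiv_lt_0_compat; lra.
have B_gt0 : 0 < B / p by apply: Rdiv_lt_0_compat; lra.
have -> : (p * Y + (1 - 2 * p) * Xc) / (w * (1 - p)) = Y / w * (A / (1 - p)).
  by rewrite /A; field; lra.
have lie_le : Rpower ((p * Y + (1 - 2 * p) * Xl) / (w * k)) th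
    <= Rpower (Y / w) th * Rpower (B / p) th.
  rewrite [X in _ <= X]Rpower_mult_distr //; apply: Rle_Rpower_l; first lra.
  split; first by apply: Rdiv_lt_0_compat; nra.
  rewrite (_ : Y / w * (B / p) = (p * Y + (1 - 2 * p) * Xl) / (w * p)); last first.
    by rewrite /B; field; lra.
  apply: Rmult_le_compat_l; first nra.
  by apply: Rinv_le_contravar; nra.
rewrite -[Rpower (Y / w * _) th]Rpower_mult_distr //.
have := contraction_ge p_bd th_bd A_bd B_bd; have := Rpower_gt0 (Y / w) th.
nra.
Qed.

Definition capacity_nats p := (1 - p) * ln (2 * (1 - p)) + p * ln (2 * p).

Lemma Icap_capacity_nats p : 0 < p < 1 -> Icap p = capacity_nats p / ln 2.
Proof.
move=> p_bd; have := ln_lt_2.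
rewrite /Icap /Hbin /log2 /capacity_nats !ln_mult; try lra.
by move=> ?; field; lra.
Qed.

Lemma capacity_nats_ge p : 0 < p < 1/2 -> (1 - 2 * p) ^ 2 / 4 <= capacity_nats p.
Proof.
move=> p_bd; set a := sqrt (2 * (1 - p)); set b := sqrt (2 * p).
have a_gt0 : 0 < a by apply: sqrt_lt_R0; lra.
have b_gt0 : 0 < b by apply: sqrt_lt_R0; lra.
have aa : a * a = 2 * (1 - p) by apply: sqrt_sqrt; lra.
have bb : b * b = 2 * p by apply: sqrt_sqrt; lra.
have entropy : 2 - a - b <= capacity_nats p.
  rewrite /capacity_nats -aa -bb !ln_mult //.
  have := one_sub_inv_le_ln a_gt0; have := one_sub_inv_le_ln b_gt0.
  have a_inv : 2 * (1 - p) * / a = a by rewrite -aa; field; lra.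
  have b_inv : 2 * p * / b = b by rewrite -bb; field; lra.
  nra.
have ab : (a * b) ^ 2 = 1 - (1 - 2 * p) ^ 2.
  have -> : (a * b) ^ 2 = (a * a) * (b * b) by ring.
  by rewrite aa bb; ring.
have d4_ge0 := pow2_ge_0 ((1 - 2 * p) ^ 2).
have ab_le : a * b <= 1 - (1 - 2 * p) ^ 2 / 2.
  by apply: Rsqr_incr_0_var; rewrite /Rsqr; nra.
have hellinger : a + b <= 2 - (1 - 2 * p) ^ 2 / 4.
  by apply: Rsqr_incr_0_var; rewrite /Rsqr; nra.
lra.
Qed.

Lemma capacity_nats_gt0 p : 0 < p < 1/2 -> 0 < capacity_nats p.
Proof. by move=> p_bd; have := capacity_nats_ge p_bd; nra. Qed.

Lemma capacity_nats_le1 p : 0 < p < 1/2 -> capacity_nats p <= 1.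
Proof.
move=> p_bd; have := ln_le_sub1 (ltac:(lra) : 0 < 2 * (1 - p)).
have : ln (2 * p) < 0 by rewrite -ln_1; apply: ln_increasing; lra.
by rewrite /capacity_nats; nra.
Qed.

Lemma tail_term_le p t : 0 < p < 1/2 -> 0 <= t <= 1/2 ->
  p * ln (2 * p) ^ 2 * exp (- (t * ln (2 * p))) <= 8 * (1 - 2 * p) ^ 2.
Proof.
move=> p_bd t_bd; set b := 2 * p.
have b_bd : 0 < b < 1 by rewrite /b; lra.
have sb_gt0 : 0 < sqrt b by apply: sqrt_lt_R0; lra.
have sbsb : sqrt b * sqrt b = b by apply: sqrt_sqrt; lra.
have ln_b : ln b < 0 by rewrite -ln_1; apply: ln_increasing; lra.
have exp_le : exp (- (t * ln b)) <= / sqrt b.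
  rewrite -Rpower_sqrt; last lra.
  by rewrite /Rpower -exp_Ropp; apply: exp_le_exp; nra.
apply: Rle_trans (_ : p * ln b ^ 2 * / sqrt b <= _).
  by apply: Rmult_le_compat_l => //; nra.
have -> : p * ln b ^ 2 * / sqrt b = / 2 * (sqrt b * ln b ^ 2).
  have p_eq : p = sqrt b * sqrt b / 2 by rewrite sbsb /b; field.
  by rewrite p_eq; field; lra.
have := sqrt_mul_ln_sq_le b_bd; rewrite /b; lra.
Qed.

Lemma contraction_le p t : 0 < p < 1/2 -> 0 < t <= 1/2 ->
  contraction p t <= 1 - t * capacity_nats p + 36 * t ^ 2 * capacity_nats p.
Proof.
move=> p_bd t_bd; have capa := capacity_nats_ge p_bd.
have tail := tail_term_le p_bd (ltac:(lra) : 0 <= t <= 1/2).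
move: capa tail; rewrite /contraction /Rpower /capacity_nats.
set L1 := ln (2 * (1 - p)); set L2 := ln (2 * p) => capa tail.
have L1_gt0 : 0 < L1 by apply: ln_gt0; lra.
have L1_le : L1 <= 1 - 2 * p.
  by rewrite /L1; have := ln_le_sub1 (ltac:(lra) : 0 < 2 * (1 - p)); lra.
have L2_lt0 : L2 < 0 by rewrite -ln_1 /L2; apply: ln_increasing; lra.
rewrite (_ : - t * L1 = - (t * L1)); last ring.
rewrite (_ : - (t * L2) = t * - L2) in tail; last ring.
rewrite (_ : - t * L2 = t * - L2); last ring.
have exp1 := exp_opp_le (ltac:(nra) : 0 <= t * L1).
have exp2 := exp_le_quadratic (ltac:(nra) : 0 <= t * - L2).
set E := exp (t * - L2) in exp2 tail *.
have L1_sq : (1 - p) * L1 ^ 2 <= (1 - 2 * p) ^ 2.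
  have : L1 ^ 2 <= (1 - 2 * p) ^ 2 by apply: pow_incr; lra.
  have := pow2_ge_0 L1; nra.
have second_order : (1 - p) * exp (- (t * L1)) + p * E <=
    1 - t * ((1 - p) * L1 + p * L2) + t ^ 2 * ((1 - p) * L1 ^ 2 + p * L2 ^ 2 * E).
  have : (1 - p) * exp (- (t * L1)) <= (1 - p) * (1 - t * L1 + (t * L1) ^ 2).
    by apply: Rmult_le_compat_l; lra.
  have : p * E <= p * (1 + t * - L2 + (t * - L2) ^ 2 * E).
    by apply: Rmult_le_compat_l; lra.
  nra.
have : t ^ 2 * ((1 - p) * L1 ^ 2 + p * L2 ^ 2 * E) <= t ^ 2 * (9 * (1 - 2 * p) ^ 2).
  by apply: Rmult_le_compat_l; [apply: pow2_ge_0 | lra].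
have : t ^ 2 * (9 * (1 - 2 * p) ^ 2) <= 36 * t ^ 2 * ((1 - p) * L1 + p * L2).
  by have := pow2_ge_0 t; nra.
lra.
Qed.

Lemma ln_contraction_le p t : 0 < p < 1/2 -> 0 < t <= 1/2 ->
  ln (contraction p t) <= - (t * capacity_nats p * (1 - 36 * t)).
Proof.
move=> p_bd t_bd; have := contraction_le p_bd t_bd.
have := ln_le_sub1 (contraction_gt0 t (ltac:(lra) : 0 < p < 1)).
lra.
Qed.

(** * The potential *)

Section Potential.
Variables (V : finType) (e : rel V) (p theta : R) (v0 t : V).
Hypotheses (esym : symmetric e) (p_bd : 0 < p < 1/2) (theta_bd : 0 < theta <= 1).

Let p_gt0 : 0 < p. Proof. lra. Qed.
Let p_lt1 : p < 1. Proof. lra. Qed.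

Definition rest_weight (h : history V) : R := (\sum_(v | v != t) weight e p h v)%R.

Definition rest_consistent (h : history V) (q : V) (a : answer V) : R :=
  (\sum_(v | (v != t) && correct e v q a) weight e p h v)%R.

Lemma sum_weight_rest h : (\sum_v weight e p h v)%R = rest_weight h + weight e p h t.
Proof. by rewrite (bigD1 t) //= addrC. Qed.

Lemma sum_consistent_rest h q a : correct e t q a ->
  (\sum_(v | correct e v q a) weight e p h v)%R
  = rest_consistent h q a + weight e p h t.
Proof.
move=> t_cons; rewrite (bigD1 t) //= addrC; congr (_ + _)%R.
by apply: eq_bigl => v; rewrite andbC.
Qed.

Lemma rest_consistent_ge0 h q a : 0 <= rest_consistent h q a.
Proof. by apply/RleP/sumr_ge0 => v _; apply: weight_ge0. Qed.

Lemma rest_consistent_le_rest h q a : rest_consistent h q a <= rest_weight h.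
Proof.
apply/RleP/ler_sum_subpred => [v|v /andP []//].
by apply: weight_ge0.
Qed.

Lemma rest_consistent_le_sum h q a :
  rest_consistent h q a <= (\sum_(v | correct e v q a) weight e p h v)%R.
Proof.
apply/RleP/ler_sum_subpred => [v|v /andP []//].
by apply: weight_ge0.
Qed.

Lemma rest_consistent_target_yes h : rest_consistent h t None = 0.
Proof.
rewrite /rest_consistent big_pred0 // => v.
by rewrite /correct; case: (t =P v) => [->|_]; rewrite ?eqxx ?andbF.
Qed.

Lemma rest_consistent_some_yes h q u :
  rest_consistent h q (Some u) + rest_consistent h q None <= rest_weight h.
Proof.
apply/RleP/ler_sum_disjoint => [v|v]; first by apply: weight_ge0.
by rewrite /correct; case: eqP.
Qed.

Lemma rest_weight_rcons h q a :
  rest_weight (rcons h (q, a))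
  = p * rest_weight h + (1 - 2 * p) * rest_consistent h q a.
Proof.
have split v : weight e p (rcons h (q, a)) v
    = p * weight e p h v + (1 - 2 * p) * (if correct e v q a then weight e p h v else 0).
  by rewrite weight_rcons; case: ifP => _; ring.
rewrite /rest_weight (eq_bigr _ (fun v _ => split v)) big_split /= -!mulr_sumr.
by rewrite /rest_consistent big_mkcondr.
Qed.

Local Notation q h := (median_query e p v0 h).

Lemma rest_consistent_correct h u : correct e t (q h) (Some u) ->
  2 * rest_consistent h (q h) (Some u) + weight e p h t <= rest_weight h.
Proof.
move=> t_cons; have := median_query_halves v0 p_gt0 p_lt1 esym h u.
by rewrite sum_consistent_rest // sum_weight_rest; lra.
Qed.

Lemma rest_consistent_half h c : correct e t (q h) c ->
  2 * rest_consistent h (q h) c <= rest_weight h.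
Proof.
case: c => [u /rest_consistent_correct|].
  by have := weight_gt0 e p_gt0 p_lt1 h t; lra.
rewrite /correct; case: eqP => // -> _; rewrite rest_consistent_target_yes.
by have := rest_consistent_le_rest h t None; have := rest_consistent_ge0 h t None; lra.
Qed.

Lemma rest_consistent_lie h c l : correct e t (q h) c ->
  rest_consistent h (q h) c + rest_consistent h (q h) l <= rest_weight h.
Proof.
case: c => [u /rest_consistent_correct c_le|]; last first.
  rewrite /correct; case: eqP => // -> _; rewrite rest_consistent_target_yes.
  by have := rest_consistent_le_rest h t l; lra.
case: l => [u'|]; last exact: rest_consistent_some_yes.
have := median_query_halves v0 p_gt0 p_lt1 esym h u'.
have := rest_consistent_le_sum h (q h) (Some u').
by rewrite sum_weight_rest; lra.
Qed.

Definition potential (h : history V) : R :=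
  Rpower (rest_weight h / weight e p h t) theta.

Hypothesis V_gt1 : (1 < #|V|)%N.

Lemma rest_weight_gt0 h : 0 < rest_weight h.
Proof.
have [v v_t] : exists v, v != t.
  have [x [y [_ _ xy]]] := card_gt1P V_gt1.
  by case: (eqVneq x t) => [xt|]; [exists y; rewrite -xt eq_sym | exists x].
apply/RltP; rewrite /rest_weight (bigD1 v) //=; apply: ltr_pwDl.
  by apply/RltP/weight_gt0; lra.
by apply: sumr_ge0 => i _; apply: weight_ge0.
Qed.

Lemma potential_step h c l : correct e t (q h) c ->
  (1 - p) * potential (rcons h (q h, c)) + p * potential (rcons h (q h, l))
  <= contraction p theta * potential h.
Proof.
move=> t_cons; have wt_gt0 := weight_gt0 e p_gt0 p_lt1 h t.
have [k [w_l p_le_k]] :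
    exists k, weight e p (rcons h (q h, l)) t = weight e p h t * k /\ p <= k.
  exists (if correct e t (q h) l then 1 - p else p); split; first exact: weight_rcons.
  by case: ifP => _; lra.
rewrite /potential w_l !rest_weight_rcons weight_rcons t_cons.
apply: contraction_step_le => //; try exact: rest_consistent_ge0.
- exact: rest_weight_gt0.
- exact: rest_consistent_half.
- exact: rest_consistent_lie.
Qed.

Lemma potential_ge_failure h :
  1 - potential h <= ((heaviest e p v0 h == t)%:R)%R.
Proof.
have pot_gt0 : 0 < potential h by apply: Rpower_gt0.
case: eqP => [_|out_t]; first by rewrite /= mulr1n -R1E; lra.
have wt_gt0 := weight_gt0 e p_gt0 p_lt1 h t.
have w_out : weight e p h t <= rest_weight h.
  apply: Rle_trans (_ : weight e p h (heaviest e p v0 h) <= _).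
    exact/RleP/heaviest_max.
  apply/RleP; rewrite /rest_weight (bigD1 (heaviest e p v0 h)) /=; last exact/eqP.
  by rewrite lerDl sumr_ge0 // => v _; apply: weight_ge0.
have : Rpower (rest_weight h / weight e p h t) 0 <= potential h.
  apply: Rle_Rpower; last lra.
  by apply: (Rmult_le_reg_r (weight e p h t)) => //; field_simplify; lra.
rewrite Rpower_O /= ?mulr0n -?R0E; first lra.
by apply: Rdiv_lt_0_compat => //; exact: rest_weight_gt0.
Qed.

Lemma expect_success_ge cor lie : valid_adversary e t cor lie -> forall m prev h,
  1 - contraction p theta ^ m * potential h
  <= expect_coins p m (fun bs =>
       ((heaviest e p v0 (run_aux (median_search e p v0) cor lie bs prev h) == t)%:R)%R).
Proof.
move=> adv; elim=> [|m IH] prev h /=.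
  by rewrite Rmult_1_l; apply: potential_ge_failure.
have [t_cons _] := adv prev h (q h).
have step := potential_step (lie prev h (q h)) t_cons.
have IHc := IH (rcons prev false) (rcons h (q h, cor prev h (q h))).
have IHl := IH (rcons prev true) (rcons h (q h, lie prev h (q h))).
have rho_m : 0 <= contraction p theta ^ m.
  by apply: pow_le; apply/Rlt_le/contraction_gt0; lra.
move: step IHc IHl; set Ec := expect_coins _ _ _; set El := expect_coins _ _ _.
set Gc := potential (rcons h (q h, cor _ _ _)); set Gl := potential _.
move=> step IHc IHl.
have : (1 - p) * (1 - contraction p theta ^ m * Gc) <= (1 - p) * Ec.
  by apply: Rmult_le_compat_l; lra.
have : p * (1 - contraction p theta ^ m * Gl) <= p * El.
  by apply: Rmult_le_compat_l; lra.
have : contraction p theta ^ m * ((1 - p) * Gc + p * Gl)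
    <= contraction p theta ^ m * (contraction p theta * potential h).
  exact: Rmult_le_compat_l.
lra.
Qed.

Lemma potential_nil_le : potential [::] <= Rpower (INR #|V|) theta.
Proof.
rewrite /potential /weight big_nil Rdiv_1_r; apply: Rle_Rpower_l; first lra.
split; first exact: rest_weight_gt0.
rewrite INRE; apply/RleP; rewrite /rest_weight /weight.
under eq_bigr do rewrite big_nil.
by rewrite sumr_const ler_nat; apply: leq_trans (max_card _) _.
Qed.

Lemma success_prob_median_search_ge T cor lie : valid_adversary e t cor lie ->
  1 - contraction p theta ^ T * Rpower (INR #|V|) theta
  <= success_prob p T (median_search e p v0) cor lie t.
Proof.
move=> adv; rewrite success_prob_expect.
apply: Rle_trans (expect_success_ge adv T [::] [::]).
have := potential_nil_le; have : 0 <= contraction p theta ^ T.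
  by apply: pow_le; apply/Rlt_le/contraction_gt0; lra.
nra.
Qed.

End Potential.

(** * Choice of parameters *)

(* [1/144] keeps [1 - 36 θ >= 3/4]. *)
Definition theta_choice L D := Rmin (1/144) (sqrt (L * D) / L).

Lemma theta_choice_bd L D : 0 < L -> 0 < D -> 0 < theta_choice L D <= 1/144.
Proof.
move=> L_gt0 D_gt0; split; last exact: Rmin_l.
apply: Rmin_glb_lt; first lra.
by apply: Rdiv_lt_0_compat => //; apply: sqrt_lt_R0; nra.
Qed.

Lemma theta_choice_exponent_le L D K : 0 < L -> 0 < D ->
  L + 50 * sqrt (L * D) + 200 * D <= K ->
  theta_choice L D * L - K * (theta_choice L D * (1 - 36 * theta_choice L D)) <= - D.
Proof.
move=> L_gt0 D_gt0 K_ge; have th_bd := theta_choice_bd L_gt0 D_gt0.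
move: th_bd K_ge; rewrite /theta_choice; set s := sqrt (L * D); set th := Rmin _ _.
move=> th_bd K_ge.
have s_ge0 : 0 <= s by apply: sqrt_pos.
have ss : s * s = L * D by apply: sqrt_sqrt; nra.
have thL_le : th * L <= s.
  have : th <= s / L by apply: Rmin_r.
  move=> le; apply: (Rmult_le_reg_r (/ L)); first exact: Rinv_0_lt_compat.
  by field_simplify; lra.
have th_large : D <= th * (3/2 * s + 150 * D).
  rewrite /th; apply: (Rmin_case _ _ (fun x => D <= x * (3/2 * s + 150 * D))); first lra.
  have -> : s / L * (3/2 * s + 150 * D) = 3/2 * (s * s) / L + 150 * D * (s / L).
    by field; lra.
  have : 0 <= s / L by apply: Rmult_le_pos => //; apply/Rlt_le/Rinv_0_lt_compat.
  rewrite ss (_ : 3/2 * (L * D) / L = 3/2 * D); last by field; lra.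
  nra.
have damp : 3/4 * th <= th * (1 - 36 * th) by nra.
have : (L + 50 * s + 200 * D) * (th * (1 - 36 * th)) <= K * (th * (1 - 36 * th)).
  by apply: Rmult_le_compat_r; lra.
have : th * (th * L) <= th * s by apply: Rmult_le_compat_l; lra.
have : (50 * s + 200 * D) * (3/4 * th) <= (50 * s + 200 * D) * (th * (1 - 36 * th)).
  by apply: Rmult_le_compat_l; lra.
nra.
Qed.

Lemma failure_bound_le p d L (T : nat) (D := ln (/ d)) :
  0 < p < 1/2 -> 0 < d < 1/2 -> 0 < L ->
  (L + 50 * sqrt (L * D) + 202 * D) / capacity_nats p < INR T + 1 ->
  contraction p (theta_choice L D) ^ T * exp (theta_choice L D * L) <= d.
Proof.
move=> p_bd d_bd L_gt0 T_gt.
have D_gt : / 2 < D by apply: half_lt_ln_inv.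
have I_gt0 := capacity_nats_gt0 p_bd; have I_le1 := capacity_nats_le1 p_bd.
have th_bd := theta_choice_bd L_gt0 (ltac:(lra) : 0 < D).
move: th_bd T_gt I_gt0 I_le1; set th := theta_choice L D; set I := capacity_nats p.
move=> th_bd T_gt I_gt0 I_le1.
have K_ge : L + 50 * sqrt (L * D) + 200 * D <= INR T * I.
  (* rounding [T] down costs at most [I <= 1 < 2 D] *)
  have : L + 50 * sqrt (L * D) + 202 * D < (INR T + 1) * I.
    move: T_gt; rewrite /Rdiv => /(Rmult_lt_compat_r I _ _ I_gt0).
    by rewrite Rmult_assoc Rinv_l; lra.
  nra.
have exponent : th * L - INR T * I * (th * (1 - 36 * th)) <= - D.
  exact: theta_choice_exponent_le L_gt0 (ltac:(lra) : 0 < D) K_ge.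
have rho_gt0 : 0 < contraction p th by apply: contraction_gt0; lra.
have ln_rho : INR T * ln (contraction p th) <= INR T * - (th * I * (1 - 36 * th)).
  apply: Rmult_le_compat_l; first exact: pos_INR.
  exact: ln_contraction_le p_bd (ltac:(lra) : 0 < th <= 1/2).
rewrite -Rpower_pow // /Rpower -exp_plus.
have -> : d = exp (- D).
  by rewrite exp_Ropp /D exp_ln ?Rinv_inv //; apply: Rinv_0_lt_compat; lra.
apply: exp_le_exp; lra.
Qed.

Lemma truncn_bounds r : 0 <= r -> INR (Num.truncn r) <= r < INR (Num.truncn r) + 1.
Proof.
move=> /RleP/truncn_itv/andP [le lt]; rewrite INRE.
by split; [apply/RleP | rewrite -natr1 in lt; apply/RltP].
Qed.

Theorem theorem1 :
  exists C1 C2 : R,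
  forall (V : finType) (e : rel V),
    symmetric e -> irreflexive e -> (0 < #|V|)%N -> connected_graph e ->
  forall p delta : R, 0 < p < 1/2 -> 0 < delta < 1/2 ->
  exists (T : nat) (A : algorithm V),
    INR T <= / Icap p *
       (log2 (INR #|V|) + C1 * sqrt (ln (INR #|V|) * ln (/ delta))
        + C2 * ln (/ delta)) /\
    forall (t : V) (cor lie : seq bool -> history V -> V -> answer V),
      valid_adversary e t cor lie ->
      success_prob p T A cor lie t >= 1 - delta.
Proof.
exists (50 / ln 2), (202 / ln 2) => V e esym _ V_gt0 _ p d p_bd d_bd.
have [v0 _] := card_gt0P V_gt0.
have ln2_gt0 : 0 < ln 2 by have := ln_lt_2; lra.
have I_gt0 := capacity_nats_gt0 p_bd.
have n_ge1 : 1 <= INR #|V| by rewrite INRE; apply/RleP; rewrite ler1n.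
set L := ln (INR #|V|); set D := ln (/ d).
have L_ge0 : 0 <= L by apply: ln_ge0.
have D_gt0 : 0 < D by rewrite /D; have := half_lt_ln_inv d_bd; lra.
set T0 := (L + 50 * sqrt (L * D) + 202 * D) / capacity_nats p.
have [T_le T_gt] : INR (Num.truncn T0) <= T0 < INR (Num.truncn T0) + 1.
  apply: truncn_bounds; apply: Rmult_le_pos; last exact/Rlt_le/Rinv_0_lt_compat.
  by have := sqrt_pos (L * D); lra.
exists (Num.truncn T0), (median_search e p v0); split.
  rewrite (Icap_capacity_nats (ltac:(lra) : 0 < p < 1)) /log2 -/L -/D.
  by rewrite (_ : _ * _ = T0) // /T0; field; lra.
move=> t cor lie adv; apply: Rle_ge.
have [V_le1|V_gt1] := leqP #|V| 1; first by rewrite success_prob_card_le1 //; lra.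
have L_gt0 : 0 < L by apply: ln_gt0; rewrite INRE; apply/RltP; rewrite ltr1n.
have th_bd : 0 < theta_choice L D <= 1 by have := theta_choice_bd L_gt0 D_gt0; lra.
apply: Rle_trans (success_prob_median_search_ge v0 esym p_bd th_bd V_gt1 _ adv).
by have := failure_bound_le p_bd d_bd L_gt0 T_gt; rewrite /Rpower -/L -/D; lra.
Qed.
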